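(* Let $L$ be a normal incline and let $A$ be an $n\times n$ completely positive matrix over $L$ such that every right almost principal $2\times 2$ submatrix of $A$ has positive determinant greater than or equal to its negative determinant. Then $A$ is LU-completely positive.
   Context: An incline is a nonempty set $L$ with binary operations $\oplus,\otimes$ such that $(L,\oplus)$ is a semilattice ($\oplus$ associative, commutative, idempotent), $(L,\otimes)$ is a semigroup, $x\otimes(y\oplus z)=(x\otimes y)\oplus(x\otimes z)$ and $x\oplus(x\otimes y)=x$ for all $x,y,z$. The order is $x\le y\iff x\oplus y=y$; $L$ is commutative if $\otimes$ is commutative. An r-ideal is a nonempty $J\subseteq L$ closed under $\oplus$ and under multiplication by arbitrary elements of $L$; a lattice ideal is a nonempty $J\subseteq L$ closed under $\oplus$ and downward closed. A commutative incline $L$ is normal if it has an additive identity $\mathbf{0}$ and a multiplicative identity $\mathbf{1}$ and: every singly generated r-ideal is a lattice ideal (LI-property); for each $x$ there is a unique $c$ with $c\otimes c=x$; $x\otimes y\le(x\otimes x)\oplus(y\otimes y)$ for all $x,y$. Matrix product: $(BC)_{ij}=\bigoplus_k b_{ik}\otimes c_{kj}$; $B^T$ is the transpose. $A$ is completely positive if $A=BB^T$ for some $n\times k$ matrix $B$ over $L$ all of whose entries are of the form $c\otimes c$. $A$ is LU-completely positive if $A=CC^T$ for some lower triangular $n\times n$ matrix $C$ over $L$. For index sets $\alpha=\{\alpha_1<\dots<\alpha_k\}$, $\beta=\{\beta_1<\dots<\beta_k\}$, $A[\alpha|\beta]$ is the submatrix with $(i,j)$ entry $a_{\alpha_i\beta_j}$;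 it is right almost principal if $\alpha_j=\beta_j$ for $1\le j\le k-1$ but $\alpha_k\ne\beta_k$. For a $2\times 2$ matrix $\begin{bmatrix}p&q\\ r&s\end{bmatrix}$, the positive determinant is $p\otimes s$ and the negative determinant is $q\otimes r$. *)

From mathcomp Require Import all_boot all_algebra.
Set Implicit Arguments. Unset Strict Implicit. Unset Printing Implicit Defensive.

Section Incline.
Variables (T : Type) (add mul : T -> T -> T).

Definition is_incline : Prop :=
  ((forall x y z, add x (add y z) = add (add x y) z) /\
      (forall x y, add x y = add y x) /\
      (forall x, add x x = x) /\
      (forall x y z, mul x (mul y z) = mul (mul x y) z) /\
      (forall x y z, mul x (add y z) = add (mul x y) (mul x z)) /\
      (forall x y, add x (mul x y) = x)).

Definition ile (x y : T) : Prop := add x y = y.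

Definition is_commutative : Prop := forall x y, mul x y = mul y x.

Definition r_ideal (J : T -> Prop) : Prop :=
  ((exists x, J x) /\
      (forall x y, J x -> J y -> J (add x y)) /\
      (forall x r, J x -> J (mul r x) /\ J (mul x r))).

Definition lattice_ideal (J : T -> Prop) : Prop :=
  ((exists x, J x) /\
      (forall x y, J x -> J y -> J (add x y)) /\
      (forall x y, J y -> ile x y -> J x)).

Definition r_ideal_gen (a : T) : T -> Prop :=
  fun x => forall J, r_ideal J -> J a -> J x.

Definition normal_incline (zero one : T) : Prop :=
  (is_incline /\
      is_commutative /\
      (forall x, add zero x = x) /\
      (forall x, mul one x = x /\ mul x one = x) /\
      (forall a, lattice_ideal (r_ideal_gen a)) /\
      (forall x, exists! c, mul c c = x) /\
      (forall x y, ile (mul x y) (add (mul x x) (mul y y)))).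

Definition imulmx (zero : T) m k p (B : 'M[T]_(m, k)) (C : 'M[T]_(k, p))
  : 'M[T]_(m, p) :=
  \matrix_(i, j) \big[add/zero]_(l < k) mul (B i l) (C l j).

Definition completely_positive (zero : T) n (A : 'M[T]_n) : Prop :=
  exists k (B : 'M[T]_(n, k)),
    (forall i j, exists c, B i j = mul c c) /\ A = imulmx zero B B^T.

Definition lower_triangular (zero : T) n (C : 'M[T]_n) : Prop :=
  forall i j : 'I_n, (i < j)%N -> C i j = zero.

Definition LU_completely_positive (zero : T) n (A : 'M[T]_n) : Prop :=
  exists C : 'M[T]_n, lower_triangular zero C /\ A = imulmx zero C C^T.

(* every right almost principal 2x2 submatrix A[{i<j}|{i<l}], j <> l,
   has positive determinant a_ii a_jl >= negative determinant a_il a_ji *)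
Definition rap2_condition n (A : 'M[T]_n) : Prop :=
  forall i j l : 'I_n, (i < j)%N -> (i < l)%N -> j != l ->
    ile (mul (A i l) (A j i)) (mul (A i i) (A j l)).

End Incline.

From mathcomp Require Import all_boot all_algebra.
From Stdlib Require Import IndefiniteDescription.
Set Implicit Arguments. Unset Strict Implicit. Unset Printing Implicit Defensive.

(* In a normal incline squaring is an order embedding onto the whole incline,
   and x <= a forces x = a r. From A = B B^T one gets symmetry and the
   Cauchy-Schwarz inequality a_ij^2 <= a_ii a_jj. Column j of the lower factor
   C is obtained by dividing the entries a_ij (i > j) by d_j = sqrt(a_jj): the
   condition on right almost principal minors (for i <> l) and Cauchy-Schwarz
   (for i = l) give a_ij a_lj <= d_j^2 a_il, and a cancellation lemma turns this
   into quotients y_i with d_j y_i = a_ij and y_i y_l <= a_il. Then every term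
   of (C C^T)_ij lies below a_ij, and the term of index min(i, j) equals it. *)

Section Incline.
Variables (T : Type) (add mul : T -> T -> T).
Hypothesis incl : is_incline add mul.

Local Notation "x ⊕ y" := (add x y) (at level 50, left associativity).
Local Notation "x ⊗ y" := (mul x y) (at level 40, left associativity).
Local Notation "x ≼ y" := (ile add x y) (at level 70, no associativity).

Lemma addA x y z : x ⊕ (y ⊕ z) = x ⊕ y ⊕ z.
Proof. by case: incl => h _; apply: h. Qed.
Lemma addC x y : x ⊕ y = y ⊕ x.
Proof. by case: incl => _ [h _]; apply: h. Qed.
Lemma addxx x : x ⊕ x = x.
Proof. by case: incl => _ [_ [h _]]; apply: h. Qed.
Lemma mulA x y z : x ⊗ (y ⊗ z) = x ⊗ y ⊗ z.
Proof. by case: incl => _ [_ [_ [h _]]]; apply: h. Qed.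
Lemma mulDr x y z : x ⊗ (y ⊕ z) = x ⊗ y ⊕ x ⊗ z.
Proof. by case: incl => _ [_ [_ [_ [h _]]]]; apply: h. Qed.
Lemma add_mul_absorb x y : x ⊕ x ⊗ y = x.
Proof. by case: incl => _ [_ [_ [_ [_ h]]]]; apply: h. Qed.

Lemma le_refl x : x ≼ x.
Proof. exact: addxx. Qed.
Lemma le_anti x y : x ≼ y -> y ≼ x -> x = y.
Proof. by rewrite /ile => hxy hyx; rewrite -hyx addC hxy. Qed.
Lemma le_trans x y z : x ≼ y -> y ≼ z -> x ≼ z.
Proof. by rewrite /ile => hxy hyz; rewrite -hyz addA hxy. Qed.
Lemma le_addl x y : x ≼ x ⊕ y.
Proof. by rewrite /ile addA addxx. Qed.
Lemma le_addr x y : y ≼ x ⊕ y.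
Proof. by rewrite addC; apply: le_addl. Qed.
Lemma add_le x y z : x ≼ z -> y ≼ z -> x ⊕ y ≼ z.
Proof. by rewrite /ile => hxz hyz; rewrite -addA hyz hxz. Qed.
Lemma mul_le_l x y : x ⊗ y ≼ x.
Proof. by rewrite /ile addC add_mul_absorb. Qed.
Lemma le_mul2l z x y : x ≼ y -> z ⊗ x ≼ z ⊗ y.
Proof. by rewrite /ile => hxy; rewrite -mulDr hxy. Qed.

Lemma le_big_seq (I : eqType) (r : seq I) (F : I -> T) (idx : T) i :
  i \in r -> F i ≼ \big[add/idx]_(j <- r) F j.
Proof.
elim: r => [|j r IHr] //; rewrite in_cons big_cons => /predU1P [->|ir].
  exact: le_addl.
exact: le_trans (IHr ir) (le_addr _ _).
Qed.

Section Commutative.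
Hypothesis mulC : forall x y, x ⊗ y = y ⊗ x.

Lemma mulDl x y z : (x ⊕ y) ⊗ z = x ⊗ z ⊕ y ⊗ z.
Proof. by rewrite mulC mulDr !(mulC z). Qed.
Lemma mul_le_r x y : x ⊗ y ≼ y.
Proof. by rewrite mulC; apply: mul_le_l. Qed.
Lemma le_mul2r z x y : x ≼ y -> x ⊗ z ≼ y ⊗ z.
Proof. by rewrite !(mulC _ z); apply: le_mul2l. Qed.
Lemma le_mul x x' y y' : x ≼ x' -> y ≼ y' -> x ⊗ y ≼ x' ⊗ y'.
Proof. by move=> hx hy; apply: le_trans (le_mul2r y hx) (le_mul2l x' hy). Qed.
Lemma mulACA a b c d : a ⊗ b ⊗ (c ⊗ d) = a ⊗ c ⊗ (b ⊗ d).
Proof. by rewrite -!mulA (mulA b) (mulC b c) -(mulA c). Qed.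

Section Zero.
Variable zero : T.
Hypothesis add0x : forall x, zero ⊕ x = x.

Lemma le0x x : zero ≼ x.
Proof. exact: add0x. Qed.
Lemma mul0x x : zero ⊗ x = zero.
Proof. by apply: le_anti; [apply: mul_le_l | apply: le0x]. Qed.
Lemma mulx0 x : x ⊗ zero = zero.
Proof. by rewrite mulC mul0x. Qed.

Lemma big_le k (F : 'I_k -> T) c :
  (forall l, F l ≼ c) -> \big[add/zero]_(l < k) F l ≼ c.
Proof.
move=> Fc; apply: (big_ind (fun x => x ≼ c)) => [|x y|l _].
- exact: le0x.
- exact: add_le.
- exact: Fc.
Qed.

Lemma le_big k (F : 'I_k -> T) l : F l ≼ \big[add/zero]_(m < k) F m.
Proof. by apply: le_big_seq; rewrite mem_index_enum. Qed.

Lemma big_eq_ub k (F : 'I_k -> T) c l0 :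
  (forall l, F l ≼ c) -> F l0 = c -> \big[add/zero]_(l < k) F l = c.
Proof.
by move=> Fc Fl0; apply: le_anti; [apply: big_le | rewrite -Fl0; apply: le_big].
Qed.

Local Notation gram B := (imulmx add mul zero B B^T).

Section Gram.
Variables (n k : nat) (B : 'M[T]_(n, k)).

Lemma gramE i j : gram B i j = \big[add/zero]_(l < k) (B i l ⊗ B j l).
Proof. by rewrite mxE; apply: eq_bigr => l _; rewrite mxE. Qed.

Lemma gram_sym i j : gram B i j = gram B j i.
Proof. by rewrite !gramE; apply: eq_bigr => l _; apply: mulC. Qed.

End Gram.

Definition lower_factor n (d : 'I_n -> T) (y : 'I_n -> 'I_n -> T) : 'M[T]_n :=
  \matrix_(i, m) if (m < i)%N then y m i else if m == i then d m else zero.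

Section LowerFactor.
Variables (n : nat) (d : 'I_n -> T) (y : 'I_n -> 'I_n -> T).
Local Notation C := (lower_factor d y).

Lemma lower_factor_lt (i m : 'I_n) : (m < i)%N -> C i m = y m i.
Proof. by move=> mi; rewrite mxE mi. Qed.
Lemma lower_factor_diag (i : 'I_n) : C i i = d i.
Proof. by rewrite mxE ltnn eqxx. Qed.
Lemma lower_factor_gt (i m : 'I_n) : (i < m)%N -> C i m = zero.
Proof. by move=> im; rewrite mxE ltnNge (ltnW im) -val_eqE /= gtn_eqF. Qed.

Lemma lower_factor_lower_triangular : lower_triangular zero C.
Proof. exact: lower_factor_gt. Qed.

Lemma gram_lower_factor (A : 'M[T]_n) :
  (forall i j, A i j = A j i) -> (forall j, d j ⊗ d j = A j j) ->
  (forall j i : 'I_n, (j < i)%N -> d j ⊗ y j i = A i j) ->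
  (forall j i l : 'I_n, (j < i)%N -> (j < l)%N -> y j i ⊗ y j l ≼ A i l) ->
  A = imulmx add mul zero C C^T.
Proof.
move=> A_sym dd_diag dy_col yy_le; apply/matrixP => i j; rewrite gramE.
wlog ji : i j / (j <= i)%N => [wlog_ji|].
  case: (leqP j i) => [/wlog_ji // | /ltnW ij].
  by rewrite A_sym wlog_ji //; apply: eq_bigr => m _; apply: mulC.
have term_j : C i j ⊗ C j j = A i j.
  rewrite lower_factor_diag; case: ltngtP ji => // [ji _ | /val_inj -> _].
    by rewrite lower_factor_lt // mulC dy_col.
  by rewrite lower_factor_diag dd_diag.
symmetry; apply: (big_eq_ub _ term_j) => m.
case: (ltngtP m j) => [mj | jm | /val_inj ->].
- have mi := leq_trans mj ji.
  by rewrite !lower_factor_lt //; apply: yy_le.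
- by rewrite (lower_factor_gt jm) mulx0; apply: le0x.
- by rewrite term_j; apply: le_refl.
Qed.

End LowerFactor.

Section Normal.
Variable one : T.
Hypothesis mul1x : forall x, one ⊗ x = x.
Hypothesis lattice_ideal_gen : forall a, lattice_ideal add (r_ideal_gen add mul a).
Hypothesis sqrt_uniq : forall x, exists! c, c ⊗ c = x.
Hypothesis mul_le_sq : forall x y, x ⊗ y ≼ x ⊗ x ⊕ y ⊗ y.

Lemma mulx1 x : x ⊗ one = x.
Proof. by rewrite mulC mul1x. Qed.

Lemma exists_sqrt x : exists c, c ⊗ c = x.
Proof. by case: (sqrt_uniq x) => c [cc _]; exists c. Qed.

Lemma sq_inj p q : p ⊗ p = q ⊗ q -> p = q.
Proof. by case: (sqrt_uniq (q ⊗ q)) => c [_ uniq_c] /uniq_c <-; apply: uniq_c. Qed.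

Lemma le_of_sq_le p q : p ⊗ p ≼ q ⊗ q -> p ≼ q.
Proof.
move=> pq; apply: sq_inj; rewrite mulDl !mulDr; apply: le_anti; last first.
  exact: le_trans (le_addr _ (q ⊗ q)) (le_addr _ _).
have pq_le : p ⊗ q ≼ q ⊗ q.
  exact: le_trans (mul_le_sq p q) (add_le pq (le_refl _)).
by apply: add_le; apply: add_le => //; [rewrite mulC | apply: le_refl].
Qed.

(* x lies in the downward closed r-ideal generated by a, which is contained in
   the r-ideal {a r | r} since a = a 1. *)
Lemma le_factor a x : x ≼ a -> exists r, x = a ⊗ r.
Proof.
have [_ [_ a_down]] := lattice_ideal_gen a.
move=> /(a_down x a (fun J _ => id)) /(_ (fun z => exists r, z = a ⊗ r)).
apply; last by exists one; rewrite mulx1.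
split; first by exists a, one; rewrite mulx1.
split; first by move=> _ _ [r1 ->] [r2 ->]; exists (r1 ⊕ r2); rewrite mulDr.
move=> _ s [r ->]; split; first by exists (s ⊗ r); rewrite mulA (mulC s) -mulA.
by exists (r ⊗ s); rewrite mulA.
Qed.

Lemma fix_sqrt t w c : t ⊗ w = w -> c ⊗ c = w -> t ⊗ c = c.
Proof. by move=> tw cc; apply: sq_inj; rewrite mulACA cc -mulA tw tw. Qed.

Lemma fix_le t w z : t ⊗ w = w -> z ≼ w -> t ⊗ z = z.
Proof. by move=> tw /le_factor [r ->]; rewrite mulA tw. Qed.

(* Write a = v t and d = (d + v) f; then z = v f satisfies z^2 <= d a, so z lies
   below sqrt(d a), which t fixes; hence z = t z = a f <= a, and e = t + f works. *)
Lemma cancel_of_mul_eq d v a : a ≼ v -> d ⊗ v = d ⊗ a ->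
  exists e, d ⊗ e = d /\ v ⊗ e ≼ a.
Proof.
move=> av dv_da; have [t a_vt] := le_factor av.
have [f d_f] := le_factor (le_addl d v).
have t_da : t ⊗ (d ⊗ a) = d ⊗ a by rewrite mulC -dv_da -mulA -a_vt dv_da.
have d_split : d = d ⊗ f ⊕ v ⊗ f by rewrite {1}d_f mulDl.
have vf_d : v ⊗ f ≼ d by rewrite {1}d_split; apply: le_addr.
have [c cc] := exists_sqrt (d ⊗ a).
have vf_c : v ⊗ f ≼ c.
  apply: le_of_sq_le; rewrite cc -dv_da (mulC d).
  exact: le_mul (mul_le_l _ _) vf_d.
have t_vf : t ⊗ (v ⊗ f) = v ⊗ f by apply: fix_le (fix_sqrt t_da cc) vf_c.
have vf_a : v ⊗ f ≼ a by rewrite -t_vf mulA (mulC t) -a_vt; apply: mul_le_l.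
exists (t ⊕ f); split; last by rewrite mulDr -a_vt; apply: add_le (le_refl a) vf_a.
apply: le_anti; first by rewrite mulDr; apply: add_le; apply: mul_le_l.
rewrite mulDr {1}d_split; apply: add_le; first exact: le_addr.
by apply: le_trans (le_addl _ (d ⊗ f)); rewrite -t_vf mulC; apply: le_mul2r.
Qed.

Lemma cancel_of_sq_le d u a : d ⊗ d ⊗ u ≼ d ⊗ d ⊗ a ->
  exists e, d ⊗ e = d /\ u ⊗ e ≼ a.
Proof.
move=> dd_le.
have [|e [dde ua_e]] := cancel_of_mul_eq (d := d ⊗ d) (le_addl a u).
  by rewrite mulDr addC.
exists e; split.
  by rewrite mulC; apply: (fix_sqrt (w := d ⊗ d)); rewrite // mulC.
by apply: le_trans ua_e; apply: le_mul2r; apply: le_addr.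
Qed.

Lemma fix_big_mul (I : eqType) (r : seq I) (e : I -> T) d :
  (forall i, d ⊗ e i = d) -> d ⊗ \big[mul/one]_(i <- r) e i = d.
Proof.
move=> de; apply: (big_ind (fun x => d ⊗ x = d)) => [|x y dx dy|i _].
- exact: mulx1.
- by rewrite mulA dx.
- exact: de.
Qed.

Lemma big_mul_le (I : eqType) (r : seq I) (e : I -> T) i :
  i \in r -> \big[mul/one]_(j <- r) e j ≼ e i.
Proof.
elim: r => [|j r IHr] //; rewrite in_cons big_cons => /predU1P [->|ir].
  exact: mul_le_l.
exact: le_trans (mul_le_r _ _) (IHr ir).
Qed.

(* One common multiplier fixing d handles all pairs (i, l): take the product of
   the multipliers given by cancel_of_sq_le for each pair. *)
Lemma exists_column_quotient (I : finType) (P : pred I) d (x : I -> T)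
    (a : I -> I -> T) :
  (forall i l, P i -> P l -> x i ⊗ x l ≼ d ⊗ d ⊗ a i l) ->
  exists y : I -> T, (forall i, P i -> d ⊗ y i = x i) /\
    (forall i l, P i -> P l -> y i ⊗ y l ≼ a i l).
Proof.
move=> xx_le.
have /functional_choice [r x_dr] : forall i, exists r, P i -> x i = d ⊗ r.
  move=> i; case: (boolP (P i)) => [Pi|]; last by exists d.
  have : x i ≼ d by apply/le_of_sq_le/(le_trans (xx_le i i Pi Pi))/mul_le_l.
  by case/le_factor => s ->; exists s.
have /functional_choice [e de] : forall p : I * I, exists e, d ⊗ e = d /\
    (P p.1 -> P p.2 -> r p.1 ⊗ r p.2 ⊗ e ≼ a p.1 p.2).
  move=> [i l] /=.
  case: (boolP (P i)) => [Pi|]; last by exists one; rewrite mulx1.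
  case: (boolP (P l)) => [Pl|]; last by exists one; rewrite mulx1.
  have [|e [de re]] := @cancel_of_sq_le d (r i ⊗ r l) (a i l).
    by rewrite mulACA -!x_dr //; apply: xx_le.
  by exists e.
pose E := \big[mul/one]_(p : I * I) e p.
have dE : d ⊗ E = d by apply: fix_big_mul => p; case: (de p).
exists (fun i => r i ⊗ E); split => [i Pi | i l Pi Pl] /=.
  by rewrite (mulC (r i)) mulA dE x_dr.
have E_le : E ⊗ E ≼ e (i, l).
  by apply: le_trans (mul_le_l _ _) (big_mul_le _ _); rewrite mem_index_enum.
by rewrite mulACA; apply: le_trans (le_mul2l _ E_le) ((de (i, l)).2 Pi Pl).
Qed.

Lemma gram_cauchy_schwarz (n k : nat) (B : 'M[T]_(n, k)) i j :
  gram B i j ⊗ gram B i j ≼ gram B i i ⊗ gram B j j.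
Proof.
have [c cc] := exists_sqrt (gram B i i ⊗ gram B j j).
suff Bij_c : gram B i j ≼ c by rewrite -cc; apply: le_mul.
rewrite gramE; apply: big_le => l; apply: le_of_sq_le.
rewrite cc mulACA; apply: le_mul; rewrite gramE.
  exact: (le_big (fun m => B i m ⊗ B i m)).
exact: (le_big (fun m => B j m ⊗ B j m)).
Qed.

Section Factorization.
Variables (n : nat) (A : 'M[T]_n).
Hypothesis A_sym : forall i j, A i j = A j i.
Hypothesis A_cauchy_schwarz : forall i j, A i j ⊗ A i j ≼ A i i ⊗ A j j.
Hypothesis A_rap2 : rap2_condition add mul A.

Lemma exists_lower_column (j : 'I_n) d : d ⊗ d = A j j ->
  exists y : 'I_n -> T, (forall i : 'I_n, (j < i)%N -> d ⊗ y i = A i j) /\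
    (forall i l : 'I_n, (j < i)%N -> (j < l)%N -> y i ⊗ y l ≼ A i l).
Proof.
move=> dd; apply: (exists_column_quotient (P := fun i : 'I_n => (j < i)%N)).
move=> i l /= ji jl; rewrite dd; case: (eqVneq i l) => [<-|il].
  by rewrite (A_sym i j); apply: A_cauchy_schwarz.
by rewrite (A_sym l j) mulC; apply: A_rap2.
Qed.

Lemma LU_completely_positive_of_rap2 : LU_completely_positive add mul zero A.
Proof.
have /functional_choice [d dd] : forall j, exists d, d ⊗ d = A j j.
  by move=> j; apply: exists_sqrt.
have /functional_choice [y col_y] := fun j => exists_lower_column (dd j).
exists (lower_factor d y); split; first exact: lower_factor_lower_triangular.
apply: gram_lower_factor A_sym dd _ _ => j.
  exact: (col_y j).1.
exact: (col_y j).2.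
Qed.

End Factorization.
End Normal.
End Zero.
End Commutative.
End Incline.

Theorem mainTheorem8 (T : Type) (add mul : T -> T -> T) (zero one : T)
  (n : nat) (A : 'M[T]_n) :
  normal_incline add mul zero one ->
  completely_positive add mul zero A ->
  rap2_condition add mul A ->
  LU_completely_positive add mul zero A.
Proof.
move=> [incl [mulC [add0x [unit [lattice_ideal_gen [sqrt_uniq mul_le_sq]]]]]].
move=> [k [B [_ ->]]] rap2.
have mul1x x : mul one x = x by case: (unit x).
apply: (LU_completely_positive_of_rap2 incl mulC add0x mul1x lattice_ideal_gen
          sqrt_uniq mul_le_sq _ _ rap2).
- exact: gram_sym.
- exact: gram_cauchy_schwarz.
Qed.
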